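(* The quiver $Q'=Q^{\mathrm{cut}}(Z)$ is acyclic.
   Context: $(Q,Z)$ is a gentle pair, i.e. a locally gentle pair (every vertex is head, resp. tail, of at most two arrows; every arrow $b$ gives at most one admissible and at most one inadmissible length-2 path of the form $cb$, and likewise of the form $ba$) with only finitely many admissible paths (paths with no subpath in $Z$); equivalently, the semilinear gentle algebra $\Lambda=K_{\boldsymbol{\sigma}}Q/\langle Z\rangle$ is finite-dimensional over the division ring $K$. A vertex $v$ is relational if $v=t(b)=h(a)$ for some $ba\in Z$. The Zembyk excision $Q'=Q^{\mathrm{cut}}(Z)$ (denoted in the paper by $Q$ with a scissors superscript) has vertices $v'$ for non-relational $v\in Q_0$ and two distinct vertices $v(\sharp),v(\flat)$ for each relational $v$, and arrows $a'$ for $a\in Q_1$; heads and tails are those of $Q$ at non-relational vertices, while at a relational vertex $v$ the incident arrows are reattached to $v(\sharp)$ or $v(\flat)$ so that for arrows $a,b$ with $h(a)=v=t(b)$, $b'a'$ is a path in $Q'$ exactly when $ba\notin Z$ (in particular for $ba\in Z$, $\{h'(a'),t'(b')\}=\{v(\sharp),v(\flat)\}$). *)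

(* Finite quivers: vertices V, arrows A (finTypes),
   head h and tail t : A -> V.  A relation set Z of length-2 paths is a
   boolean relation: [Z b a] means the path ba (first a, then b) is in Z. *)
From mathcomp Require Import all_boot.
Set Implicit Arguments. Unset Strict Implicit. Unset Printing Implicit Defensive.

Section Quivers.
Variables (V A : finType) (h t : A -> V) (Z : A -> A -> bool).

Definition relations_ok : Prop := forall b a, Z b a -> h a = t b.

Definition locally_gentle : Prop :=
  relations_ok /\
  (forall v, #|[set a | h a == v]| <= 2) /\
  (forall v, #|[set a | t a == v]| <= 2) /\
  (forall b, #|[set a | (h a == t b) && ~~ Z b a]| <= 1) /\
  (forall b, #|[set a | (h a == t b) && Z b a]| <= 1) /\
  (forall b, #|[set c | (t c == h b) && ~~ Z c b]| <= 1) /\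
  (forall b, #|[set c | (t c == h b) && Z c b]| <= 1).

(* Paths are listed in traversal order [a1; a2; ...; an], h(a_i) = t(a_{i+1});
   this is the path a_n ... a_2 a_1 in the paper's notation.
   Admissible: no length-2 subpath a_{i+1} a_i lies in Z. *)
Definition adm_step (x y : A) : bool := (h x == t y) && ~~ Z y x.

Definition admissible_path (p : seq A) : bool :=
  if p is x :: p' then path adm_step x p' else true.

(* only finitely many admissible paths (the trivial paths e_v being finitely
   many anyway, as V is finite) *)
Definition finitely_many_admissible : Prop :=
  exists s : seq (seq A), forall p, p != [::] -> admissible_path p -> p \in s.

Definition gentle_pair : Prop := locally_gentle /\ finitely_many_admissible.

Definition relational (v : V) : bool :=
  [exists b, exists a, Z b a && (t b == v) && (h a == v)].

(* Q' = (V', A, h', t') is a Zembyk excision of (Q, Z): pi : V' -> V sends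
   v' |-> v, v(sharp), v(flat) |-> v; arrows are the same. *)
Definition is_excision (V' : finType) (pi : V' -> V) (h' t' : A -> V') : Prop :=
  (forall a, pi (h' a) = h a) /\
  (forall a, pi (t' a) = t a) /\
  (forall v, ~~ relational v -> #|[set x | pi x == v]| = 1) /\
  (forall v, relational v -> #|[set x | pi x == v]| = 2) /\
  (forall a b, h a = t b -> (h' a == t' b) = ~~ Z b a).

End Quivers.

Definition acyclic (V A : finType) (h t : A -> V) : Prop :=
  forall (x : A) (p : seq A), ~~ cycle (fun a b => h a == t b) (x :: p).

(* Composable arrows of the excision are exactly the admissible length-2
   paths of Q, so an oriented cycle of Q' is a closed admissible path of Q.
   Going around it n times gives admissible paths of every length, which is
   impossible when there are only finitely many admissible paths. *)
From mathcomp Require Import all_boot zify.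

Set Implicit Arguments. Unset Strict Implicit. Unset Printing Implicit Defensive.

Lemma size_flatten_nseq (T : Type) (s : seq T) n :
  size (flatten (nseq n s)) = size s * n.
Proof. by rewrite size_flatten /shape map_nseq sumn_nseq. Qed.

Lemma cycle_path_flatten_nseq (T : Type) (e : rel T) x p n :
  cycle e (x :: p) -> path e x (flatten (nseq n (rcons p x))).
Proof.
move=> /= cyc_xp; elim: n => [|n IHn] //=.
by rewrite cat_path cyc_xp last_rcons IHn.
Qed.

Section Admissible.
Variables (V A : finType) (h t : A -> V) (Z : A -> A -> bool).

Lemma admissible_size_bounded :
  finitely_many_admissible h t Z ->
  exists N, forall p, admissible_path h t Z p -> size p <= N.
Proof.
case=> s adm_in_s; exists (\max_(q <- s) size q) => -[|x p] adm_p //.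
exact: leq_bigmax_seq (adm_in_s (x :: p) isT adm_p) _.
Qed.

Lemma finitely_many_admissible_no_cycle x p :
  finitely_many_admissible h t Z -> ~~ cycle (adm_step h t Z) (x :: p).
Proof.
case/admissible_size_bounded=> N sizeN; apply/negP => cyc_xp.
have adm_rep := cycle_path_flatten_nseq N.+1 cyc_xp.
have := sizeN (x :: flatten (nseq N.+1 (rcons p x))) adm_rep.
rewrite -cat1s size_cat size_flatten_nseq size_rcons; lia.
Qed.

Lemma excision_step_admissible (V' : finType) (pi : V' -> V) (h' t' : A -> V') :
  is_excision h t Z pi h' t' ->
  subrel (fun a b => h' a == t' b) (adm_step h t Z).
Proof.
case=> pi_h [pi_t [_ [_ comp_adm]]] a b /eqP hab'.
have hab : h a = t b by rewrite -pi_h -pi_t hab'.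
by rewrite /adm_step hab eqxx /= -(comp_adm _ _ hab) hab'.
Qed.

End Admissible.

Theorem lemma5p20 (V A : finType) (h t : A -> V) (Z : A -> A -> bool)
  (V' : finType) (pi : V' -> V) (h' t' : A -> V') :
  gentle_pair h t Z -> is_excision h t Z pi h' t' -> acyclic h' t'.
Proof.
move=> [_ fin_adm] exc x p.
apply: contraNN (finitely_many_admissible_no_cycle x p fin_adm).
exact/sub_cycle/(excision_step_admissible exc).
Qed.
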